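(* Let $X$ and $Y$ be real Banach spaces with $Y$ a dual Banach space, let $\mathcal{M}:\ell^{\infty}(X,Y)\to Y$ be a generalized invariant mean, and let $P_X^Y:Lip_0(X,Y)\to L(X,Y)$ be defined by $P_X^Y(f)(z)=\mathcal{M}(\phi_f(z))$ for $f\in Lip_0(X,Y)$, $z\in X$, where $\phi_f(z)\in\ell^\infty(X,Y)$ is the map $x\mapsto f(z+x)-f(x)$. Then $Lip_0(X,Y)$ is topologically isomorphic to $L(X,Y)\oplus_1\ker(P_X^Y)$, via $f\mapsto (P_X^Y(f), f-P_X^Y(f))$.
   Context: $Lip_0(X,Y)$ is the Banach space of Lipschitz maps $f:X\to Y$ with $f(0)=0$ and norm $Lip(f)=\sup_{x\neq y}\|f(x)-f(y)\|/\|x-y\|$; $L(X,Y)$ is the space of bounded linear operators with the operator norm, a closed subspace of $Lip_0(X,Y)$. $\ell^\infty(X,Y)$ is the Banach space of bounded maps $X\to Y$ with the sup norm. A generalized invariant mean is a norm-one linear operator $\mathcal{M}:\ell^\infty(X,Y)\to Y$ such that $\mathcal{M}(g_x)=\mathcal{M}(g)$ for all $g\in\ell^\infty(X,Y)$, $x\in X$, where $g_x(z)=g(x+z)$, and $\mathcal{M}(\hat y)=y$ for every $y\in Y$, where $\hat y$ is the constant map with value $y$ (such an operator exists when $Y$ is a dual space). With these, $P_X^Y$ is a well-defined map into $L(X,Y)$. The space $L(X,Y)\oplus_1\ker(P_X^Y)$ carries the norm $\|(T,g)\|=\|T\|+Lip(g)$. *)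

From HB Require Import structures.
From mathcomp Require Import all_boot all_order all_algebra.
From mathcomp Require Import all_classical all_reals all_analysis.
Set Implicit Arguments. Unset Strict Implicit. Unset Printing Implicit Defensive.
Import Order.TTheory GRing.Theory Num.Theory.
Import numFieldNormedType.Exports.
Local Open Scope classical_set_scope.
Local Open Scope ring_scope.

Section Defs.
Variable R : realType.

Definition lin_map (U V : lmodType R) (T : U -> V) : Prop :=
  forall (a : R) (u v : U), T (a *: u + v) = a *: T u + T v.

Definition is_lip0 (X Y : normedModType R) (f : X -> Y) : Prop :=
  f 0 = 0 /\ exists k : R, forall x y : X, `|f x - f y| <= k * `|x - y|.

Definition lipn (X Y : normedModType R) (f : X -> Y) : R :=
  sup [set r | exists x y : X, x != y /\ r = `|f x - f y| / `|x - y|].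

Definition is_bdd_lin (X Y : normedModType R) (T : X -> Y) : Prop :=
  lin_map T /\ exists k : R, forall x : X, `|T x| <= k * `|x|.

Definition opn (X Y : normedModType R) (T : X -> Y) : R :=
  sup [set r | exists x : X, `|x| <= 1 /\ r = `|T x|].

Definition is_bdd (X Y : normedModType R) (g : X -> Y) : Prop :=
  exists k : R, forall x : X, `|g x| <= k.

Definition supn (X Y : normedModType R) (g : X -> Y) : R :=
  sup [set r | exists x : X, r = `|g x|].

(* Y is a dual Banach space: Y is linearly isometric (via J) onto the space
   of bounded linear functionals on some normed space Z, normed by the
   operator norm. *)
Definition is_dual_space (Y : normedModType R) : Prop :=
  exists (Z : normedModType R) (J : Y -> Z -> R),
    [/\ forall y, is_bdd_lin (J y : Z -> R^o),
        forall (a : R) (y1 y2 : Y), J (a *: y1 + y2) = fun z => a * J y1 z + J y2 z,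
        forall phi : Z -> R^o, is_bdd_lin phi -> exists y, J y = phi
      & forall y, `|y| = opn (J y : Z -> R^o)].

(* generalized invariant mean M : l^oo(X,Y) -> Y (M is given on all maps,
   only its values on bounded maps matter) *)
Definition gen_inv_mean (X Y : normedModType R) (M : (X -> Y) -> Y) : Prop :=
  [/\ (forall (a : R) (g h : X -> Y), is_bdd g -> is_bdd h ->
         M (fun z => a *: g z + h z) = a *: M g + M h),
      (forall g, is_bdd g -> `|M g| <= supn g),
      sup [set r | exists g : X -> Y, [/\ is_bdd g, supn g <= 1 & r = `|M g|]] = 1,
      (forall (g : X -> Y) (x : X), is_bdd g -> M (fun z => g (x + z)) = M g)
    & forall y : Y, M (fun _ => y) = y].

Definition PXY (X Y : normedModType R) (M : (X -> Y) -> Y) (f : X -> Y) : X -> Y :=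
  fun z => M (fun x => f (z + x) - f x).

End Defs.

From HB Require Import structures.
From mathcomp Require Import all_boot all_order all_algebra.
From mathcomp Require Import all_classical all_reals all_analysis.
From mathcomp Require Import lra.
Import Order.TTheory GRing.Theory Num.Theory.
Import numFieldNormedType.Exports.
Local Open Scope classical_set_scope.
Local Open Scope ring_scope.

Set Implicit Arguments.
Unset Strict Implicit.
Unset Printing Implicit Defensive.

(** For Lipschitz f the difference maps [phi_f(z) = f (z + .) - f] are bounded
    by [Lip(f) |z|], hence so is [P f z]. Translation invariance of M and
    [phi_f(z + w) = phi_f(z)(w + .) + phi_f(w)] make [P f] additive, and an
    additive map between real normed spaces bounded by a multiple of the norm
    is linear: it is Z-linear, so the defect [b |-> T (b u) - b T u] is
    additive, vanishes on Z and is therefore bounded, hence zero. For linear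
    T, [phi_T(z)] is the constant [T z], so [P T = T]. Thus P is a linear
    projection of [Lip_0(X,Y)] onto [L(X,Y)] with [||P f|| <= Lip(f)], and
    [Lip(f) <= ||P f|| + Lip(f - P f) <= 3 Lip(f)]. *)

Section AdditiveBounded.
Variable R : realType.

Lemma additive_bounded_eq0 (U : zmodType) (V : normedZmodType R)
    (D : {additive U -> V}) (K : R) :
  (forall u, `|D u| <= K) -> forall u, D u = 0.
Proof.
move=> DK u; apply/eqP; rewrite -normr_eq0 eq_le normr_ge0 andbT leNgt.
apply/negP => Du_gt0; have := DK (u *+ (Num.truncn (K / `|D u|)).+1).
rewrite raddfMn normrMn; apply/negP; rewrite -ltNge -mulr_natr mulrC.
by rewrite -ltr_pdivrMr // truncnS_gt.
Qed.

Lemma additive_zero_on_int_bounded (V : normedZmodType R) (D : {additive R -> V})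
    (K : R) :
  (forall m : int, D m%:~R = 0) -> (forall b, `|D b| <= K * `|b|) ->
  forall b, `|D b| <= K.
Proof.
move=> Dint DK b.
have K_ge0 : 0 <= K by have := le_trans (normr_ge0 _) (DK 1); rewrite normr1 mulr1.
have -> : D b = D (b - (Num.floor b)%:~R) by rewrite raddfB Dint subr0.
apply: le_trans (DK _) _; rewrite -[leRHS]mulr1 ler_wpM2l //.
rewrite ger0_norm ?subr_ge0 ?floor_le //.
by have := floorD1_gt b; rewrite intrD1; lra.
Qed.

Lemma additive_bounded_scalable (V W : normedModType R) (T : {additive V -> W})
    (L : R) :
  (forall v, `|T v| <= L * `|v|) -> scalable T.
Proof.
move=> TL a u; apply/eqP; rewrite -subr_eq0; apply/eqP.
pose D b := T (b *: u) - b *: T u.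
have D_nmod : nmod_morphism D.
  split=> [|b c]; first by rewrite /D !scale0r raddf0 subr0.
  by rewrite /D !scalerDl raddfD opprD addrACA.
pose Dadd : {additive R -> W} :=
  HB.pack D (GRing.isNmodMorphism.Build _ _ D D_nmod).
have Dint m : Dadd m%:~R = 0 by rewrite /= /D !scaler_int raddfMz subrr.
have DK b : `|Dadd b| <= (L * `|u| + `|T u|) * `|b|.
  rewrite /= /D mulrDl; apply: le_trans (ler_normB _ _) _; apply: lerD.
    by rewrite (le_trans (TL _)) // normrZ mulrCA mulrC.
  by rewrite normrZ mulrC.
exact: (additive_bounded_eq0 (additive_zero_on_int_bounded Dint DK) a).
Qed.

Lemma additive_bounded_lin_map (V W : normedModType R) (T : V -> W) (L : R) :
  {morph T : x y / x + y} -> (forall v, `|T v| <= L * `|v|) -> lin_map T.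
Proof.
move=> TD TL a u v; rewrite TD; congr (_ + _).
have T_nmod : nmod_morphism T.
  by split=> //; apply: (addrI (T 0)); rewrite -TD !addr0.
exact: (@additive_bounded_scalable _ _
  (HB.pack T (GRing.isNmodMorphism.Build _ _ T T_nmod)) _ TL).
Qed.

End AdditiveBounded.

Section Norms.
Variable R : realType.

Lemma sup_le_nonneg (S : set R) (b : R) : 0 <= b -> ubound S b -> sup S <= b.
Proof.
move=> b_ge0 Sb; have [[r Sr]|/set0P/negP] := pselect (S !=set0).
  by apply: ge_sup; first exists r.
by rewrite negbK => /eqP ->; rewrite sup0.
Qed.

Lemma sup_ge0 (S : set R) : (forall r, S r -> 0 <= r) -> 0 <= sup S.
Proof.
move=> S_ge0; have [S_sup|/sup_out ->] // := pselect (has_sup S).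
have [r Sr] := S_sup.1.
exact: le_trans (S_ge0 _ Sr) (sup_upper_bound S_sup Sr).
Qed.

Variables X Y : normedModType R.
Implicit Types (f g T : X -> Y) (x y z : X).

Lemma lipn_ge0 f : 0 <= lipn f.
Proof. by apply: sup_ge0 => r [x [y [_ ->]]]; rewrite divr_ge0. Qed.

Lemma ler_lipn f : is_lip0 f -> forall x y, `|f x - f y| <= lipn f * `|x - y|.
Proof.
case=> _ [k f_k] x y; have [->|xy] := eqVneq x y.
  by rewrite !subrr !normr0 mulr0.
have xy_gt0 : 0 < `|x - y| by rewrite normr_gt0 subr_eq0.
rewrite -ler_pdivrMr //; apply: sup_upper_bound; last by exists x, y.
split; first by exists (`|f x - f y| / `|x - y|), x, y.
by exists k => r [a [b [ab ->]]]; rewrite ler_pdivrMr ?normr_gt0 ?subr_eq0.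
Qed.

Lemma lipn_le f (b : R) :
  0 <= b -> (forall x y, `|f x - f y| <= b * `|x - y|) -> lipn f <= b.
Proof.
move=> b_ge0 f_b; apply: sup_le_nonneg => // r [x [y [xy ->]]].
by rewrite ler_pdivrMr ?normr_gt0 ?subr_eq0.
Qed.

Lemma ler_lipn_shift f z x : is_lip0 f -> `|f (z + x) - f x| <= lipn f * `|z|.
Proof. by move=> f_lip; rewrite (le_trans (ler_lipn f_lip _ _)) // addrK. Qed.

Lemma lip0D f g : is_lip0 f -> is_lip0 g -> is_lip0 (f \+ g).
Proof.
move=> f_lip g_lip; split; first by rewrite /= (proj1 f_lip) (proj1 g_lip) addr0.
exists (lipn f + lipn g) => x y; rewrite opprD addrACA mulrDl.
by apply: le_trans (ler_normD _ _) _; apply: lerD; apply: ler_lipn.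
Qed.

Lemma lip0N f : is_lip0 f -> is_lip0 (\- f).
Proof.
case=> f0 [k f_k]; split; first by rewrite /= f0 oppr0.
by exists k => x y; rewrite /= -opprD normrN.
Qed.

Lemma opn_ge0 T : 0 <= opn T.
Proof. by apply: sup_ge0 => r [x [_ ->]]. Qed.

Lemma opn_le T (b : R) : (forall x, `|x| <= 1 -> `|T x| <= b) -> opn T <= b.
Proof.
move=> T_b; apply: ge_sup; first by exists `|T 0|, 0; rewrite normr0.
by move=> r [x [x_le1 ->]]; apply: T_b.
Qed.

Lemma lin_map0 T : lin_map T -> T 0 = 0.
Proof.
move=> T_lin; have := T_lin 1 0 0; rewrite addr0 !scale1r => /esym/eqP.
by rewrite -subr_eq0 addrK => /eqP.
Qed.

Lemma lin_mapB T : lin_map T -> forall x y, T (x - y) = T x - T y.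
Proof. by move=> T_lin x y; rewrite addrC -scaleN1r T_lin scaleN1r addrC. Qed.

Lemma ler_opn T : is_bdd_lin T -> forall x, `|T x| <= opn T * `|x|.
Proof.
case=> T_lin [k T_k] x; have [->|x_neq0] := eqVneq x 0.
  by rewrite lin_map0 // !normr0 mulr0.
have x_gt0 : 0 < `|x| by rewrite normr_gt0.
rewrite -ler_pdivrMr //; apply: sup_upper_bound.
  split; first by exists `|T 0|, 0; rewrite normr0.
  exists (Num.max k 0) => r [v [v_le1 ->]]; apply: le_trans (T_k v) _.
  have k_le : k <= Num.max k 0 by rewrite le_max lexx.
  rewrite -[leRHS]mulr1; apply: le_trans (ler_wpM2r (normr_ge0 v) k_le) _.
  by rewrite ler_wpM2l // le_max lexx orbT.
exists (`|x|^-1 *: x); split; first by rewrite normfZV.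
by rewrite -[_ *: x]addr0 T_lin lin_map0 // addr0 normrZ ger0_norm ?invr_ge0 // mulrC.
Qed.

Lemma lin_map_diffB f T : lin_map T ->
  forall x y, (f \- T) x - (f \- T) y = (f x - f y) - T (x - y).
Proof. by move=> T_lin x y; rewrite lin_mapB //= !opprD !opprK addrACA. Qed.

Lemma bdd_lin_lip0 T : is_bdd_lin T -> is_lip0 T.
Proof.
move=> T_bdd; split; first exact: lin_map0 (proj1 T_bdd).
by exists (opn T) => x y; rewrite -lin_mapB ?ler_opn //; case: T_bdd.
Qed.

Lemma supn_le g (b : R) : (forall x, `|g x| <= b) -> supn g <= b.
Proof.
move=> g_b; apply: ge_sup; first by exists `|g 0|, 0.
by move=> r [x ->].
Qed.

End Norms.

Section InvariantMeanProjection.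
Variables (R : realType) (X Y : normedModType R) (M : (X -> Y) -> Y).
Hypothesis M_mean : gen_inv_mean M.
Implicit Types (f g T : X -> Y) (x z w : X).

Lemma shift_diff_bdd f z : is_lip0 f -> is_bdd (fun x => f (z + x) - f x).
Proof. by move=> f_lip; exists (lipn f * `|z|) => x; apply: ler_lipn_shift. Qed.

Lemma normPXY_le f z : is_lip0 f -> `|PXY M f z| <= lipn f * `|z|.
Proof.
case: M_mean => _ M_norm _ _ _ f_lip.
apply: le_trans (M_norm _ (shift_diff_bdd z f_lip)) _.
by apply: supn_le => x; apply: ler_lipn_shift.
Qed.

Lemma PXYD f : is_lip0 f -> {morph PXY M f : z w / z + w}.
Proof.
case: M_mean => M_lin _ _ M_inv _ f_lip z w; rewrite /PXY.
pose dz x := f (z + x) - f x.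
have -> : (fun x => f (z + w + x) - f x) =
    (fun x => 1 *: dz (w + x) + (f (w + x) - f x)).
  by apply: funext => x; rewrite scale1r /dz !addrA subrK.
have dz_bdd : is_bdd dz := shift_diff_bdd z f_lip.
have dzw_bdd : is_bdd (fun x => dz (w + x)) by have [k dz_k] := dz_bdd; exists k.
by rewrite (M_lin 1 _ _ dzw_bdd (shift_diff_bdd w f_lip)) scale1r M_inv.
Qed.

Lemma PXY_bdd_lin f : is_lip0 f -> is_bdd_lin (PXY M f).
Proof.
move=> f_lip; split; last by exists (lipn f) => z; apply: normPXY_le.
by apply: additive_bounded_lin_map (PXYD f_lip) _ => z; apply: normPXY_le.
Qed.

Lemma PXY_lin_id T : is_bdd_lin T -> PXY M T = T.
Proof.
case=> T_lin _; case: M_mean => _ _ _ _ M_cst; apply: funext => z; rewrite /PXY.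
have -> : (fun x => T (z + x) - T x) = (fun _ => T z).
  by apply: funext => x; rewrite -{1}[z]scale1r T_lin scale1r addrK.
exact: M_cst.
Qed.

Lemma PXY_comb (a : R) f g : is_lip0 f -> is_lip0 g ->
  PXY M (fun x => a *: f x + g x) = (fun z => a *: PXY M f z + PXY M g z).
Proof.
case: M_mean => M_lin _ _ _ _ f_lip g_lip; apply: funext => z; rewrite /PXY.
have -> : (fun x => (a *: f (z + x) + g (z + x)) - (a *: f x + g x)) =
    (fun x => a *: (f (z + x) - f x) + (g (z + x) - g x)).
  by apply: funext => x; rewrite scalerBr opprD addrACA.
by rewrite M_lin //; apply: shift_diff_bdd.
Qed.

Lemma PXY_sub_PXY f : is_lip0 f -> PXY M (f \- PXY M f) = (fun _ => 0).
Proof.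
move=> f_lip; have P_bdd := PXY_bdd_lin f_lip.
have -> : f \- PXY M f = (fun x => (-1) *: PXY M f x + f x).
  by apply: funext => x; rewrite scaleN1r addrC.
rewrite (PXY_comb _ (bdd_lin_lip0 P_bdd) f_lip) (PXY_lin_id P_bdd).
by apply: funext => z; rewrite scaleN1r addNr.
Qed.

Lemma PXY_lin_add T g : is_bdd_lin T -> is_lip0 g -> PXY M g = (fun _ => 0) ->
  PXY M (T \+ g) = T.
Proof.
move=> T_bdd g_lip Pg0; have -> : T \+ g = (fun x => 1 *: T x + g x).
  by apply: funext => x; rewrite scale1r.
rewrite (PXY_comb _ (bdd_lin_lip0 T_bdd) g_lip) (PXY_lin_id T_bdd) Pg0.
by apply: funext => z; rewrite scale1r addr0.
Qed.

Lemma opn_PXY_le f : is_lip0 f -> opn (PXY M f) <= lipn f.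
Proof.
move=> f_lip; apply: opn_le => x x_le1; apply: le_trans (normPXY_le x f_lip) _.
by rewrite -[leRHS]mulr1 ler_wpM2l ?lipn_ge0.
Qed.

Lemma lipn_sub_PXY_le f : is_lip0 f -> lipn (f \- PXY M f) <= lipn f *+ 2.
Proof.
move=> f_lip; apply: lipn_le => [|x y]; first by rewrite mulrn_wge0 ?lipn_ge0.
have [P_lin _] := PXY_bdd_lin f_lip.
rewrite lin_map_diffB // mulr2n mulrDl; apply: le_trans (ler_normB _ _) _.
by apply: lerD; [apply: ler_lipn | apply: normPXY_le].
Qed.

Lemma lipn_le_opn_PXY_add f : is_lip0 f ->
  lipn f <= opn (PXY M f) + lipn (f \- PXY M f).
Proof.
move=> f_lip; have P_bdd := PXY_bdd_lin f_lip.
have Q_lip := lip0D f_lip (lip0N (bdd_lin_lip0 P_bdd)).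
apply: lipn_le => [|x y]; first by rewrite addr_ge0 ?opn_ge0 ?lipn_ge0.
have -> : f x - f y = ((f \- PXY M f) x - (f \- PXY M f) y) + PXY M f (x - y).
  by rewrite lin_map_diffB ?subrK //; case: P_bdd.
rewrite [opn _ + _]addrC mulrDl; apply: le_trans (ler_normD _ _) _.
by apply: lerD; [apply: ler_lipn | apply: ler_opn].
Qed.

End InvariantMeanProjection.

Theorem mainTheorem3 (R : realType) (X Y : completeNormedModType R)
    (M : (X -> Y) -> Y) :
  is_dual_space Y -> gen_inv_mean M ->
  (* the map f |-> (P f, f - P f) is well defined into L(X,Y) (+)_1 ker P *)
  (forall f : X -> Y, is_lip0 f ->
     [/\ is_bdd_lin (PXY M f), is_lip0 (f \- PXY M f)
       & PXY M (f \- PXY M f) = (fun _ => 0)]) /\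
  (* it is linear *)
  (forall (a : R) (f g : X -> Y), is_lip0 f -> is_lip0 g ->
     PXY M (fun x => a *: f x + g x) = (fun z => a *: PXY M f z + PXY M g z)) /\
  (* it is a bijection onto L(X,Y) (+)_1 ker P *)
  (forall (T g : X -> Y), is_bdd_lin T -> is_lip0 g -> PXY M g = (fun _ => 0) ->
     exists f : X -> Y, [/\ is_lip0 f, PXY M f = T & f \- PXY M f = g]) /\
  (forall f1 f2 : X -> Y, is_lip0 f1 -> is_lip0 f2 ->
     PXY M f1 = PXY M f2 -> f1 \- PXY M f1 = f2 \- PXY M f2 -> f1 = f2) /\
  (* it and its inverse are bounded: ||(T,g)|| = ||T|| + Lip(g) *)
  (exists c C : R, [/\ 0 < c, 0 < C &
     forall f : X -> Y, is_lip0 f ->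
       c * lipn f <= opn (PXY M f) + lipn (f \- PXY M f) <= C * lipn f]).
Proof.
move=> _ M_mean.
have P_bdd f : is_lip0 f -> is_bdd_lin (PXY M f) by apply: PXY_bdd_lin.
have Q_lip f : is_lip0 f -> is_lip0 (f \- PXY M f).
  by move=> f_lip; apply: lip0D f_lip (lip0N (bdd_lin_lip0 (P_bdd f f_lip))).
split.
  by move=> f f_lip; split; [apply: P_bdd | apply: Q_lip | apply: PXY_sub_PXY].
split; first by move=> a f g; apply: PXY_comb.
split.
  move=> T g T_bdd g_lip Pg0; have PTg := PXY_lin_add M_mean T_bdd g_lip Pg0.
  exists (T \+ g); split=> //; first exact: lip0D (bdd_lin_lip0 T_bdd) g_lip.
  by rewrite PTg; apply: funext => x /=; rewrite addrC addKr.
split.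
  move=> f1 f2 _ _ P12 Q12; apply: funext => x.
  by have := congr1 (fun h => h x) Q12; rewrite /= P12 => /addIr.
exists 1, 3; split=> // f f_lip; rewrite mul1r lipn_le_opn_PXY_add //=.
rewrite mulr_natl mulrS.
exact: lerD (opn_PXY_le M_mean f_lip) (lipn_sub_PXY_le M_mean f_lip).
Qed.
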